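(* Let $m\ge1$ and let $v_1,\ldots,v_n$ be vectors in $\mathbb{R}^d$ ($d\ge2$), not all zero, with $m$-weights $w_j=\|v_j\|^m/\sum_\ell\|v_\ell\|^m$. Then $$\sum_{j=1}^n\sum_{k=1}^n\langle v_j,v_k\rangle^m\ \ge\ b_m(\mathbb{R}^d)\Bigl(\sum_{\ell=1}^n\|v_\ell\|^m\Bigr)^2,$$ with equality if and only if $(v_j)$ gives a weighted spherical half-design of order $m$. Moreover, $(v_j)$ gives a weighted spherical $m$-design if and only if, in addition, there is equality in $$\sum_{j=1}^n\sum_{k=1}^n\|v_j\|\|v_k\|\langle v_j,v_k\rangle^{m-1}\ \ge\ b_{m-1}(\mathbb{R}^d)\Bigl(\sum_{\ell=1}^n\|v_\ell\|^m\Bigr)^2.$$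
   Context: $b_m(\mathbb{R}^d)=\int_{\mathbb{S}}\int_{\mathbb{S}}\langle x,y\rangle^m d\sigma(x)d\sigma(y)$ ($\sigma$ normalised surface measure on the unit sphere $\mathbb{S}$), equal to $0$ for $m$ odd and $\frac{1\cdot3\cdots(m-1)}{d(d+2)\cdots(d+m-2)}$ for $m$ even, with $b_0=1$. ''$(v_j)$ gives a weighted design for $P$'' means that the points $v_j/\|v_j\|$ (for $v_j\neq0$; zero vectors have weight $0$) with the $m$-weights $w_j$ satisfy $\int_{\mathbb{S}}p\,d\sigma=\sum_jw_jp(v_j/\|v_j\|)$ for all $p\in P$. A half-design of order $m$ uses $P=\operatorname{Hom}_m(\mathbb{R}^d)$ (homogeneous polynomials of degree $m$); an $m$-design uses $P=$ all polynomials of degree $\le m$. *)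

From HB Require Import structures.
From mathcomp Require Import all_boot all_order all_algebra.
From mathcomp Require Import all_classical all_reals all_analysis.
From mathcomp Require mpoly.



Unset Printing Implicit Defensive.
Import Order.TTheory GRing.Theory Num.Theory.
Local Open Scope classical_set_scope.
Local Open Scope ring_scope.

(* Points of R^d are d-tuples of reals; d.-tuple R carries the product
   (= Borel) sigma-algebra from mathcomp-analysis (measurable_tuple). *)

Definition zerov {R : realType} (d : nat) : d.-tuple R := [tuple (0:R) | _ < d].

Definition dotv {R : realType} {d : nat} (x y : d.-tuple R) : R :=
  \sum_(i < d) tnth x i * tnth y i.

Definition normv {R : realType} {d : nat} (x : d.-tuple R) : R :=
  Num.sqrt (dotv x x).

Definition sphere (R : realType) (d : nat) : set (d.-tuple R) :=
  [set x | normv x = 1].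

Definition mx_act {R : realType} {d : nat} (Q : 'M[R]_d) (x : d.-tuple R)
  : d.-tuple R := [tuple \sum_(j < d) Q i j * tnth x j | i < d].

Definition orthogonal_mx {R : realType} {d : nat} (Q : 'M[R]_d) : Prop :=
  Q *m Q^T = 1%:M.

(* sigma is the normalised surface measure on S: a probability measure on
   R^d carried by the unit sphere and invariant under the orthogonal group
   (this characterises the normalised surface measure uniquely). *)
Definition normalised_surface_measure {R : realType} {d : nat}
  (sigma : probability (d.-tuple R) R) : Prop :=
  sigma (sphere R d) = 1%E /\
  forall Q : 'M[R]_d, orthogonal_mx Q ->
  forall A : set (d.-tuple R), measurable A ->
    sigma (mx_act Q @^-1` A) = sigma A.

Definition sph_int {R : realType} {d : nat}
  (sigma : probability (d.-tuple R) R) (f : d.-tuple R -> R) : \bar R :=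
  (\int[sigma]_(x in sphere R d) (f x)%:E)%E.

Definition bm {R : realType} {d : nat}
  (sigma : probability (d.-tuple R) R) (m : nat) : \bar R :=
  (\int[sigma]_(y in sphere R d) \int[sigma]_(x in sphere R d)
      (dotv x y ^+ m)%:E)%E.

Definition peval {R : realType} {d : nat} (p : mpoly.mpoly d R)
  (x : d.-tuple R) : R := mpoly.meval (fun i => tnth x i) p.

Definition mdeg_measure (d : nat) : mpoly.Measure.type d :=
  mpoly.Measure.Pack (mpoly.Measure.Class
    (mpoly.isMeasure.Build d (@mpoly.mdeg d) (@mpoly.mdeg0 d) (@mpoly.mdegD d))).

Definition homog_poly {R : realType} {d : nat} (m : nat)
  (p : mpoly.mpoly d R) : Prop :=
  p \is mpoly.ishomog1 m (mdeg_measure d).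

(* polynomials of degree <= m *)
Definition deg_le_poly {R : realType} {d : nat} (m : nat)
  (p : mpoly.mpoly d R) : Prop :=
  (mpoly.mmeasure (mdeg_measure d) p <= m.+1)%N.

Definition normalize {R : realType} {d : nat} (x : d.-tuple R) : d.-tuple R :=
  [tuple tnth x i / normv x | i < d].

Definition mweight {R : realType} {d n : nat} (m : nat)
  (v : 'I_n -> d.-tuple R) (j : 'I_n) : R :=
  normv (v j) ^+ m / \sum_(l < n) normv (v l) ^+ m.

Definition weighted_design {R : realType} {d n : nat}
  (sigma : probability (d.-tuple R) R) (m : nat)
  (P : mpoly.mpoly d R -> Prop) (v : 'I_n -> d.-tuple R) : Prop :=
  forall p, P p ->
    sph_int sigma (peval p) =
    (\sum_(j < n | v j != zerov d) mweight m v j * peval p (normalize (v j)))%:E.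

Definition half_design {R : realType} {d n : nat}
  (sigma : probability (d.-tuple R) R) (m : nat) (v : 'I_n -> d.-tuple R) :=
  weighted_design sigma m (homog_poly m) v.

Definition sph_design {R : realType} {d n : nat}
  (sigma : probability (d.-tuple R) R) (m : nat) (v : 'I_n -> d.-tuple R) :=
  weighted_design sigma m (deg_le_poly m) v.

From HB Require Import structures.
From mathcomp Require Import all_boot all_order all_algebra.
From mathcomp Require Import all_classical all_reals all_analysis.
From mathcomp Require mpoly.
Import (canonicals, coercions) mpoly.
From mathcomp Require Import measurable_realfun ring lra zify.

(* Expanding <x,y>^k = sum_f x^f y^f over the words f in {1..d}^k turns both
   double sums into sums of squares of moments: with u_j = v_j/|v_j|, the
   weighted moments b_f = sum_j w_j u_j^f satisfy
   sum_j sum_l |v_j|^(m-k) |v_l|^(m-k) <v_j,v_l>^k = S^2 sum_f b_f^2, while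
   b_k(R^d) = sum_f a_f^2 with a_f = int x^f dsigma.  Orthogonal invariance of
   sigma makes the zonal function y |-> int <x,y>^k dsigma(x) = sum_f a_f y^f
   constant on the sphere, equal to b_k; averaging it over the u_j gives
   sum_f a_f b_f = sum_f a_f^2.  Hence
   sum_f b_f^2 = sum_f a_f^2 + sum_f (b_f - a_f)^2, with equality iff all
   moments of degree k agree, i.e. iff the weights integrate Hom_k exactly.
   Since |x|^2 = 1 on the sphere, exactness on Hom_m and Hom_(m-1) gives
   exactness in every degree <= m. *)

Set Implicit Arguments.
Unset Strict Implicit.
Unset Printing Implicit Defensive.

Import Order.TTheory GRing.Theory Num.Theory.
Local Open Scope classical_set_scope.
Local Open Scope ring_scope.

Lemma sum_sqr_pythagoras (R : realDomainType) (I : finType) (a b : I -> R) :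
  \sum_i a i * b i = \sum_i a i ^+ 2 ->
  \sum_i a i ^+ 2 <= \sum_i b i ^+ 2 /\ (\sum_i b i ^+ 2 = \sum_i a i ^+ 2 <-> a =1 b).
Proof.
move=> ab_aa.
have sum_b2 : \sum_i b i ^+ 2 = \sum_i a i ^+ 2 + \sum_i (b i - a i) ^+ 2.
  have -> : \sum_i (b i - a i) ^+ 2 =
      \sum_i b i ^+ 2 - 2 * \sum_i a i * b i + \sum_i a i ^+ 2.
    by rewrite mulr_sumr -sumrB -big_split /=; apply: eq_bigr => i _; ring.
  by rewrite ab_aa; ring.
have sqr_ge0' i : 0 <= (b i - a i) ^+ 2 by exact: sqr_ge0.
rewrite sum_b2 lerDl sumr_ge0 //; split=> //; split => [|ab].
  move=> /eqP; rewrite -subr_eq0 addrC addKr => /eqP sum0 i.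
  have /eqP := @psumr_eq0P R I xpredT _ (fun i _ => sqr_ge0' i) sum0 i isT.
  by rewrite sqrf_eq0 subr_eq0 => /eqP.
by rewrite [X in _ + X]big1 ?addr0 // => i _; rewrite ab subrr expr0n.
Qed.

Section Vectors.
Variables (R : realType) (d : nat).
Implicit Types x y : d.-tuple R.

Lemma dotvC x y : dotv x y = dotv y x.
Proof. by apply: eq_bigr => i _; rewrite mulrC. Qed.

Lemma dotvv_ge0 x : 0 <= dotv x x.
Proof. by apply: sumr_ge0 => i _; rewrite -expr2 sqr_ge0. Qed.

Lemma normv_ge0 x : 0 <= normv x.
Proof. exact: sqrtr_ge0. Qed.

Lemma sqr_normv x : normv x ^+ 2 = dotv x x.
Proof. by rewrite sqr_sqrtr // dotvv_ge0. Qed.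

Lemma tnth_zerov i : tnth (zerov d) i = 0 :> R.
Proof. by rewrite tnth_mktuple. Qed.

Lemma normv_eq0 x : (normv x == 0) = (x == zerov d).
Proof.
apply/idP/eqP => [|->]; last first.
  by rewrite /normv /dotv big1 ?sqrtr0 // => i _; rewrite tnth_zerov mulr0.
rewrite sqrtr_eq0 => xx_le0; apply: eq_from_tnth => i; rewrite tnth_zerov.
have xx0 : dotv x x = 0 by apply/eqP; rewrite eq_le xx_le0 dotvv_ge0.
have sqr_ge0' j : 0 <= tnth x j * tnth x j by rewrite -expr2 sqr_ge0.
have /eqP := @psumr_eq0P R _ xpredT _ (fun j _ => sqr_ge0' j) xx0 i isT.
by rewrite mulf_eq0 orbb => /eqP.
Qed.

Lemma normv_zerov : normv (zerov d) = 0 :> R.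
Proof. by apply/eqP; rewrite normv_eq0. Qed.

Lemma sphereE x : sphere R d x <-> dotv x x = 1.
Proof.
rewrite /sphere /=; split => [nx1|xx1]; first by rewrite -sqr_normv nx1 expr1n.
by rewrite /normv xx1 sqrtr1.
Qed.

Lemma tnth_normalize x i : tnth (normalize x) i = tnth x i / normv x.
Proof. by rewrite tnth_mktuple. Qed.

Lemma normalize_sphere x : x != zerov d -> sphere R d (normalize x).
Proof.
rewrite -normv_eq0 => nx0; apply/sphereE; rewrite /dotv.
under eq_bigr do rewrite !tnth_normalize mulrACA.
by rewrite -mulr_suml -/(dotv x x) -sqr_normv -invfM -expr2 mulfV ?expf_neq0.
Qed.

End Vectors.

Section Monomials.
Variables (R : realType) (d : nat).
Implicit Types (s : seq 'I_d) (x y : d.-tuple R).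

Definition monomial s x : R := \prod_(i <- s) tnth x i.

Lemma monomial_cat s1 s2 x : monomial (s1 ++ s2) x = monomial s1 x * monomial s2 x.
Proof. exact: big_cat. Qed.

Lemma monomial_zerov s : monomial s (zerov d) = 0 ^+ size s.
Proof.
rewrite /monomial (eq_bigr (fun=> 0)) => [|i _]; last exact: tnth_zerov.
by rewrite big_const_seq count_predT iter_mulr_1.
Qed.

Lemma monomial_normalize s x :
  x != zerov d -> monomial s x = normv x ^+ size s * monomial s (normalize x).
Proof.
rewrite -normv_eq0 => nx0; elim: s => [|i s IH].
  by rewrite /monomial !big_nil mulr1.
rewrite /monomial !big_cons -!/(monomial _ _) IH tnth_normalize exprS.
by field.
Qed.

Lemma normr_monomial_le1 s x : sphere R d x -> `|monomial s x| <= 1.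
Proof.
move=> /sphereE xx1; rewrite /monomial normr_prod; apply: prodr_ile1 => i _.
have : tnth x i * tnth x i <= 1.
  rewrite -xx1 /dotv (bigD1 i) //= lerDl.
  by apply: sumr_ge0 => j _; rewrite -expr2 sqr_ge0.
by rewrite normr_ge0 ler_norml => ?; apply/andP; split; nra.
Qed.

Lemma exprn_dotv k x y :
  dotv x y ^+ k = \sum_(f : {ffun 'I_k -> 'I_d})
                    monomial (codom f) x * monomial (codom f) y.
Proof.
rewrite -[k in LHS]card_ord -prodr_const /dotv bigA_distr_bigA.
by apply: eq_bigr => f _; rewrite /monomial /codom !big_image -big_split.
Qed.

Lemma gram_exprn_dotv (I : finType) (c : I -> R) (x : I -> d.-tuple R) k :
  \sum_j \sum_l c j * c l * dotv (x j) (x l) ^+ k =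
  \sum_(f : {ffun 'I_k -> 'I_d}) (\sum_j c j * monomial (codom f) (x j)) ^+ 2.
Proof.
symmetry; under eq_bigr => f _.
  rewrite expr2 mulr_suml; under eq_bigr do rewrite mulr_sumr.
  over.
rewrite exchange_big; apply: eq_bigr => j _; rewrite exchange_big; apply: eq_bigr => l _.
by rewrite exprn_dotv mulr_sumr; apply: eq_bigr => f _; ring.
Qed.

Lemma measurable_monomial s : measurable_fun [set: d.-tuple R] (monomial s).
Proof. by apply: measurable_prod => i _; exact: measurable_tnth. Qed.

Lemma measurable_dotv x : measurable_fun [set: d.-tuple R] (dotv x).
Proof.
apply: measurable_sum => i; apply: measurable_funM; first exact: measurable_cst.
exact: measurable_tnth.
Qed.

Lemma measurable_sphere : measurable (sphere R d).
Proof.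
have -> : sphere R d = [set: d.-tuple R] `&` (fun x => dotv x x) @^-1` [set 1].
  by apply/seteqP; split => x /=; rewrite sphereE // => -[].
apply: measurable_sum => //= i; apply: measurable_funM; exact: measurable_tnth.
Qed.

End Monomials.

Arguments measurable_sphere {R d}.

Section OrthogonalGroup.
Variables (R : realType) (d : nat).
Implicit Types (x y : d.-tuple R) (A Q : 'M[R]_d).

Definition colv x : 'cV[R]_d := \col_i tnth x i.

Lemma colv_inj : injective colv.
Proof.
move=> x y /matrixP exy; apply: eq_from_tnth => i.
by have := exy i 0; rewrite !mxE.
Qed.

Lemma colv_mx_act A x : colv (mx_act A x) = A *m colv x.
Proof.
by apply/matrixP => i j; rewrite !mxE tnth_mktuple; apply: eq_bigr => l _; rewrite mxE.
Qed.

Lemma dotvE x y : dotv x y = ((colv x)^T *m colv y) 0 0.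
Proof. by rewrite mxE; apply: eq_bigr => i _; rewrite !mxE. Qed.

Lemma mx_act_mul A Q x : mx_act A (mx_act Q x) = mx_act (A *m Q) x.
Proof. by apply: colv_inj; rewrite !colv_mx_act mulmxA. Qed.

Lemma mx_act1 x : mx_act 1%:M x = x.
Proof. by apply: colv_inj; rewrite colv_mx_act mul1mx. Qed.

Lemma dotv_mx_act A x y : dotv (mx_act A x) y = dotv x (mx_act A^T y).
Proof. by rewrite !dotvE !colv_mx_act trmx_mul mulmxA. Qed.

Lemma orthogonal_trmx Q : orthogonal_mx Q -> orthogonal_mx Q^T.
Proof. by rewrite /orthogonal_mx trmxK => /mulmx1C. Qed.

Lemma dotv_orthogonal Q x y :
  orthogonal_mx Q -> dotv (mx_act Q x) (mx_act Q y) = dotv x y.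
Proof.
move=> /orthogonal_trmx; rewrite /orthogonal_mx trmxK => QTQ.
by rewrite dotv_mx_act mx_act_mul QTQ mx_act1.
Qed.

Lemma measurable_mx_act A : measurable_fun [set: d.-tuple R] (mx_act A).
Proof.
apply/measurable_fun_tnthP => i /=.
rewrite (_ : _ \o _ = fun x => \sum_(j < d) A i j * tnth x j); last first.
  by apply: boolp.funext => x /=; rewrite tnth_mktuple.
apply: measurable_sum => j; apply: measurable_funM; first exact: measurable_cst.
exact: measurable_tnth.
Qed.

(* The Householder reflection in the hyperplane orthogonal to x - y. *)
Lemma sphere_orthogonal_transitive x y :
  sphere R d x -> sphere R d y -> exists Q, orthogonal_mx Q /\ mx_act Q x = y.
Proof.
move=> /sphereE xx1 /sphereE yy1.
have [<-|neq_xy] := eqVneq x y.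
  by exists 1%:M; rewrite /orthogonal_mx trmx1 mulmx1 mx_act1.
pose w : d.-tuple R := [tuple tnth x i - tnth y i | i < d].
have colw : colv w = colv x - colv y.
  by apply/matrixP => i j; rewrite !mxE tnth_mktuple.
have wz z : dotv w z = dotv x z - dotv y z.
  by rewrite /dotv -sumrB; apply: eq_bigr => i _; rewrite tnth_mktuple mulrBl.
have wx : dotv w x = 1 - dotv x y by rewrite wz xx1 dotvC.
have ww : dotv w w = 2 * (1 - dotv x y).
  by rewrite wz !(dotvC _ w) !wz xx1 yy1 (dotvC y); ring.
have ww_neq0 : dotv w w != 0.
  rewrite -sqr_normv expf_eq0 /= normv_eq0; apply: contra neq_xy => /eqP w0.
  apply/eqP/colv_inj/eqP; rewrite -subr_eq0 -colw w0.
  by apply/eqP/matrixP => i j; rewrite !mxE tnth_zerov.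
pose c := 2 / dotv w w; pose P := colv w *m (colv w)^T.
have wTw : (colv w)^T *m colv w = (dotv w w)%:M.
  by rewrite [LHS]mx11_scalar -dotvE.
have PP : P *m P = dotv w w *: P.
  by rewrite /P mulmxA -(mulmxA (colv w)) wTw mul_mx_scalar scalemxAl.
exists (1%:M - c *: P); split.
  have QT : (1%:M - c *: P)^T = 1%:M - c *: P.
    by rewrite raddfB /= trmx1 linearZ /= /P trmx_mul trmxK.
  rewrite /orthogonal_mx QT mulmxBl mul1mx mulmxBr mulmx1 -scalemxAl -scalemxAr.
  have -> : c *: (c *: (P *m P)) = c *: P + c *: P.
    by rewrite PP !scalerA -scalerDl /c; congr (_ *: _); field.
  by rewrite opprB addrK subrK.
apply: colv_inj; rewrite colv_mx_act mulmxBl mul1mx -scalemxAl -mulmxA.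
rewrite [_^T *m _]mx11_scalar -dotvE wx mul_mx_scalar scalerA.
have xy_neq1 : 1 - dotv x y != 0.
  by move: ww_neq0; rewrite ww mulf_eq0 negb_or => /andP[].
have -> : c * (1 - dotv x y) = 1 by rewrite /c ww; field.
by rewrite scale1r colw opprB addrC subrK.
Qed.

End OrthogonalGroup.

Section SphereMoments.
Variables (R : realType) (d : nat) (sigma : probability (d.-tuple R) R).
Local Notation words k := {ffun 'I_k -> 'I_d}.

Lemma integrable_monomial s :
  sigma.-integrable (sphere R d) (EFin \o monomial s).
Proof.
apply: measurable_bounded_integrable.
- exact: measurable_sphere.
- by move/le_lt_trans: (probability_le1 sigma measurable_sphere); apply; exact: ltry.
- apply: measurable_funTS; exact: measurable_monomial.
- exists 1; split; first exact: num_real.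
  by move=> M /ltW M_ge1 x /normr_monomial_le1 /le_trans; apply.
Qed.

Lemma integrable_monomial_comb (I : Type) (r : seq I) (c : I -> R) (t : I -> seq 'I_d) :
  sigma.-integrable (sphere R d) (fun x => (\sum_(i <- r) c i * monomial (t i) x)%:E).
Proof.
apply: (eq_integrable measurable_sphere
  (fun x => \sum_(i <- r) (c i)%:E * (monomial (t i) x)%:E)%E).
  by move=> x _; rewrite -sumEFin; apply: eq_bigr => i _; rewrite EFinM.
apply: (integrable_sum measurable_sphere) => i _.
exact/(integrableZl measurable_sphere)/integrable_monomial.
Qed.

Definition sph_moment s : R := fine (sph_int sigma (monomial s)).

Lemma sph_int_monomial s : sph_int sigma (monomial s) = (sph_moment s)%:E.
Proof.
rewrite /sph_moment fineK //.
exact: (integrable_fin_num measurable_sphere (integrable_monomial s)).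
Qed.

Lemma sph_int_monomial_comb (I : Type) (r : seq I) (c : I -> R) (t : I -> seq 'I_d) :
  sph_int sigma (fun x => \sum_(i <- r) c i * monomial (t i) x) =
  (\sum_(i <- r) c i * sph_moment (t i))%:E.
Proof.
rewrite /sph_int.
under eq_integral do rewrite -sumEFin (eq_bigr _ (fun i _ => EFinM _ _)).
rewrite (integral_sum measurable_sphere) => [|i].
  rewrite -sumEFin; apply: eq_bigr => i _.
  rewrite (integralZl measurable_sphere); last exact: integrable_monomial.
  by rewrite -/(sph_int _ _) sph_int_monomial.
exact/(integrableZl measurable_sphere)/integrable_monomial.
Qed.

Definition zonal k (z : d.-tuple R) : \bar R := sph_int sigma (fun y => dotv z y ^+ k).

Lemma zonalE k z :
  zonal k z = (\sum_(f : words k) monomial (codom f) z * sph_moment (codom f))%:E.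
Proof.
rewrite -sph_int_monomial_comb; congr sph_int.
by apply: boolp.funext => y; rewrite exprn_dotv.
Qed.

Lemma integrable_dotv_expr k z :
  sigma.-integrable (sphere R d) (fun y => (dotv z y ^+ k)%:E).
Proof.
have comb_int := integrable_monomial_comb (index_enum (words k))
  (fun f => monomial (codom f) z) (fun f => codom f).
apply: (eq_integrable measurable_sphere _ _ _ comb_int).
by move=> y _ /=; rewrite exprn_dotv.
Qed.

Lemma bm_moments k : bm sigma k = (\sum_(f : words k) sph_moment (codom f) ^+ 2)%:E.
Proof.
transitivity (sph_int sigma (fun y =>
    \sum_(f : words k) sph_moment (codom f) * monomial (codom f) y)).
  apply: eq_integral => y _.
  rewrite (eq_integral (fun x => (dotv y x ^+ k)%:E)) => [|x _]; last by rewrite dotvC.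
  rewrite -[LHS]/(zonal k y) zonalE.
  by congr EFin; apply: eq_bigr => f _; rewrite mulrC.
by rewrite sph_int_monomial_comb; under eq_bigr do rewrite -expr2.
Qed.

End SphereMoments.

Section Invariance.
Variables (R : realType) (d : nat) (sigma : probability (d.-tuple R) R).
Hypothesis sigma_surf : normalised_surface_measure sigma.
Local Notation words k := {ffun 'I_k -> 'I_d}.

Lemma zonal_mx_act k z Q :
  orthogonal_mx Q -> zonal sigma k (mx_act Q z) = zonal sigma k z.
Proof.
move=> QQ; have [_ sigma_inv] := sigma_surf.
pose phi := mx_act Q^T; pose g y := (dotv z y ^+ k)%:E.
have phiS : phi @^-1` sphere R d = sphere R d.
  apply/seteqP; split => y /=; rewrite !sphereE /phi dotv_orthogonal //;
  exact: orthogonal_trmx.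
have gphi : g \o phi = fun y => (dotv (mx_act Q z) y ^+ k)%:E.
  by apply: boolp.funext => y; rewrite /g /phi /= dotv_mx_act.
have mg : measurable_fun [set: d.-tuple R] g.
  by apply/measurable_EFinP; apply: measurable_funX; exact: measurable_dotv.
have int_gphi : sigma.-integrable (phi @^-1` sphere R d) (g \o phi).
  by rewrite phiS gphi; exact: integrable_dotv_expr.
transitivity (\int[sigma]_(x in phi @^-1` sphere R d) (g \o phi) x)%E.
  by rewrite phiS gphi.
have mphi : measurable_fun [set: d.-tuple R] phi by exact: measurable_mx_act.
rewrite -(integral_pushforward mphi mg int_gphi measurable_sphere).
apply: eq_measure_integral => A mA _.
rewrite /pushforward; apply: sigma_inv => //; exact: orthogonal_trmx.
Qed.

Lemma zonal_bm k y : sphere R d y -> zonal sigma k y = bm sigma k.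
Proof.
move=> yS; transitivity (\int[sigma]_(y' in sphere R d) (cst (zonal sigma k y)) y')%E.
  have [sigmaS1 _] := sigma_surf.
  rewrite (integral_cst _ measurable_sphere) -[LHS]mule1.
  by congr (_ * _)%E; exact/esym/sigmaS1.
apply: eq_integral => y' /[!inE] y'S.
have [Q [QQ <-]] := sphere_orthogonal_transitive yS y'S.
rewrite /= -(zonal_mx_act k y QQ).
by apply: eq_integral => x _; rewrite dotvC.
Qed.

Lemma sum_monomial_moment k y : sphere R d y ->
  \sum_(f : words k) monomial (codom f) y * sph_moment sigma (codom f) =
  \sum_(f : words k) sph_moment sigma (codom f) ^+ 2.
Proof. by move=> yS; apply: EFin_inj; rewrite -zonalE zonal_bm // bm_moments. Qed.

End Invariance.

Section WeightedAverage.
Variables (R : realType) (d n m : nat) (v : 'I_n -> d.-tuple R).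
Local Notation words k := {ffun 'I_k -> 'I_d}.
Local Notation S := (\sum_(l < n) normv (v l) ^+ m).

Definition wavg (g : d.-tuple R -> R) : R :=
  \sum_(j < n | v j != zerov d) mweight m v j * g (normalize (v j)).

Definition wmoment (s : seq 'I_d) : R := wavg (monomial s).

Lemma wavg_comb (I : Type) (r : seq I) (c : I -> R) (g : I -> d.-tuple R -> R) :
  wavg (fun x => \sum_(i <- r) c i * g i x) = \sum_(i <- r) c i * wavg (g i).
Proof.
rewrite /wavg; under eq_bigr do rewrite mulr_sumr.
rewrite exchange_big /=; apply: eq_bigr => i _.
by rewrite mulr_sumr; apply: eq_bigr => j _; ring.
Qed.

Lemma eq_wavg g h : (forall x, sphere R d x -> g x = h x) -> wavg g = wavg h.
Proof.
by move=> gh; apply: eq_bigr => j vj_neq0; rewrite gh //; exact: normalize_sphere.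
Qed.

Hypothesis v_neq0 : exists j, v j != zerov d.

Lemma sum_normv_gt0 : 0 < S.
Proof.
have [j vj_neq0] := v_neq0; rewrite (bigD1 j) //= ltr_pwDl ?exprn_gt0 //.
  by rewrite lt_neqAle normv_ge0 eq_sym normv_eq0 vj_neq0.
by apply: sumr_ge0 => i _; rewrite exprn_ge0 ?normv_ge0.
Qed.

Hypothesis m_gt0 : (0 < m)%N.

Lemma sum_mweight : \sum_(j < n | v j != zerov d) mweight m v j = 1.
Proof.
rewrite -mulr_suml.
have -> : \sum_(j < n | v j != zerov d) normv (v j) ^+ m = S.
  rewrite [RHS](bigID (fun j => v j != zerov d)) /= [X in _ + X]big1 ?addr0 //.
  by move=> j /negPn/eqP ->; rewrite normv_zerov expr0n gtn_eqF.
by rewrite mulfV // gt_eqF // sum_normv_gt0.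
Qed.

Lemma sum_monomial_wmoment (c : 'I_n -> R) s :
  (forall j, c j * normv (v j) ^+ size s = normv (v j) ^+ m) ->
  \sum_(j < n) c j * monomial s (v j) = S * wmoment s.
Proof.
move=> c_homog; rewrite /wmoment /wavg mulr_sumr [RHS]big_mkcond /=.
apply: eq_bigr => j _; case: ifPn => [vj_neq0 | /negPn/eqP vj0].
  rewrite (monomial_normalize _ vj_neq0) mulrA c_homog /mweight.
  by field; rewrite gt_eqF ?sum_normv_gt0.
have := c_homog j; rewrite vj0 monomial_zerov normv_zerov => ->.
by rewrite expr0n gtn_eqF.
Qed.

Lemma gram_wmoment k (c : 'I_n -> R) :
  (forall j, c j * normv (v j) ^+ k = normv (v j) ^+ m) ->
  \sum_(j < n) \sum_(l < n) c j * c l * dotv (v j) (v l) ^+ k =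
  S ^+ 2 * \sum_(f : words k) wmoment (codom f) ^+ 2.
Proof.
move=> c_homog; rewrite gram_exprn_dotv mulr_sumr; apply: eq_bigr => f _.
by rewrite sum_monomial_wmoment ?size_codom ?card_ord // exprMn.
Qed.

End WeightedAverage.

Section MonomialPolynomials.
Variables (R : realType) (d : nat).
Implicit Types (s : seq 'I_d) (x : d.-tuple R).

Definition mpolyXs s : mpoly.mpoly d R := \prod_(i <- s) mpoly.mpolyX R (mpoly.mnm1 i).

Lemma peval_mpolyXs s x : peval (mpolyXs s) x = monomial s x.
Proof.
rewrite /peval /mpolyXs (big_morph _ (mpoly.mevalM _) (mpoly.meval1 _)).
by apply: eq_bigr => i _; rewrite mpoly.mevalXU.
Qed.

Lemma mpolyXs_homog s : homog_poly (size s) (mpolyXs s).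
Proof.
rewrite /homog_poly; elim: s => [|i s IH].
  by rewrite /mpolyXs big_nil; exact: mpoly.dhomog1.
rewrite /mpolyXs big_cons /= -[(size s).+1]/(1 + size s)%N.
by apply: mpoly.dhomogM => //; rewrite mpoly.dhomogX /= mpoly.mdeg1.
Qed.

Lemma mpolyXs_deg_le k s : (size s <= k)%N -> deg_le_poly k (mpolyXs s).
Proof.
move=> sk; rewrite /deg_le_poly mpoly.mmeasureE; apply/bigmax_leqP_seq => mon smon _.
by have /mpoly.dhomogP -> := mpolyXs_homog s.
Qed.

Definition mword (mon : mpoly.multinom d) : seq 'I_d :=
  flatten [seq nseq (mon i) i | i <- index_enum 'I_d].

Lemma size_mword mon : size (mword mon) = mpoly.mdeg mon.
Proof.
rewrite size_flatten /shape -map_comp sumnE big_map mpoly.mdegE.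
by apply: eq_bigr => i _; rewrite /= size_nseq.
Qed.

Lemma monomial_mword mon x : monomial (mword mon) x = \prod_(i < d) tnth x i ^+ mon i.
Proof.
rewrite /monomial big_flatten /= big_map; apply: eq_bigr => i _.
by rewrite big_nseq iter_mulr_1.
Qed.

Lemma pevalE p x :
  peval p x = \sum_(mon <- mpoly.msupp p) mpoly.mcoeff mon p * monomial (mword mon) x.
Proof.
rewrite /peval {1}(mpoly.mpolyE p) (big_morph _ (mpoly.mevalD _) (mpoly.meval0 _)).
by apply: eq_bigr => mon _; rewrite mpoly.mevalZ mpoly.mevalX monomial_mword.
Qed.

End MonomialPolynomials.

Arguments mpolyXs {R d} s.

Section Designs.
Variables (R : realType) (d n m : nat).
Variables (sigma : probability (d.-tuple R) R) (v : 'I_n -> d.-tuple R).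
Local Notation words k := {ffun 'I_k -> 'I_d}.

Definition quadrature_exact (g : d.-tuple R -> R) : Prop :=
  sph_int sigma g = (wavg m v g)%:E.

Lemma quadrature_exact_monomial s :
  quadrature_exact (monomial s) <-> sph_moment sigma s = wmoment m v s.
Proof. by rewrite /quadrature_exact sph_int_monomial; split => [[]|->]. Qed.

Lemma quadrature_exact_comb (I : eqType) (r : seq I) (c : I -> R) (t : I -> seq 'I_d) :
  (forall i, i \in r -> quadrature_exact (monomial (t i))) ->
  quadrature_exact (fun x => \sum_(i <- r) c i * monomial (t i) x).
Proof.
move=> exact_t; rewrite /quadrature_exact sph_int_monomial_comb wavg_comb.
by congr EFin; apply: eq_big_seq => i /exact_t /quadrature_exact_monomial ->.
Qed.

Lemma quadrature_exact_sphere g h :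
  (forall x, sphere R d x -> g x = h x) -> quadrature_exact g -> quadrature_exact h.
Proof.
move=> gh; rewrite /quadrature_exact (eq_wavg m v gh) => <-.
by apply: eq_integral => x /[!inE] /gh ->.
Qed.

Lemma weighted_design_monomialsE (P : mpoly.mpoly d R -> Prop) (Q : pred nat) :
  (forall s, Q (size s) -> P (mpolyXs s)) ->
  (forall p mon, P p -> mon \in mpoly.msupp p -> Q (mpoly.mdeg mon)) ->
  weighted_design sigma m P v <->
  (forall s, Q (size s) -> quadrature_exact (monomial s)).
Proof.
move=> P_mpolyXs Q_mdeg; split => [design s Qs | exact_Q p Pp].
  rewrite -(boolp.funext (peval_mpolyXs s)); exact: design (P_mpolyXs s Qs).
change (quadrature_exact (peval p)); rewrite (boolp.funext (pevalE p)).
apply: quadrature_exact_comb => mon smon; apply: exact_Q.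
by rewrite size_mword; exact: Q_mdeg smon.
Qed.

Lemma homog_designE k :
  weighted_design sigma m (homog_poly k) v <->
  (forall s, size s = k -> quadrature_exact (monomial s)).
Proof.
rewrite (@weighted_design_monomialsE _ (pred1 k)).
- by split => exact_k s /eqP; exact: exact_k.
- by move=> s /eqP <-; exact: mpolyXs_homog.
- by move=> p mon /mpoly.dhomogP homog_p /homog_p /eqP.
Qed.

Lemma deg_le_designE k :
  weighted_design sigma m (deg_le_poly k) v <->
  (forall s, (size s <= k)%N -> quadrature_exact (monomial s)).
Proof.
rewrite (@weighted_design_monomialsE _ (leq^~ k)) // => [s|p mon].
  exact: mpolyXs_deg_le.
by move=> deg_p /(mpoly.mmeasure_mnm_lt (mdeg_measure d)) /leq_trans /(_ deg_p).
Qed.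

Lemma quadrature_exact_deg_le k :
  (forall s, size s = k -> quadrature_exact (monomial s)) ->
  (forall s, size s = k.-1 -> quadrature_exact (monomial s)) ->
  forall s, (size s <= k)%N -> quadrature_exact (monomial s).
Proof.
move=> exact_k exact_k1.
suff exact_codeg t s : (size s + t)%N = k -> quadrature_exact (monomial s).
  by move=> s sk; apply: (exact_codeg (k - size s)%N); rewrite subnKC.
elim/ltn_ind: t s => -[|[|t]] IH s st.
- by apply: exact_k; rewrite -st addn0.
- by apply: exact_k1; rewrite -st addn1.
apply: (@quadrature_exact_sphere
  (fun x => \sum_(i <- index_enum 'I_d) 1 * monomial (s ++ [:: i; i]) x)).
  move=> x /sphereE xx1; rewrite -[RHS]mulr1 -[in RHS]xx1 /dotv mulr_sumr.
  by apply: eq_bigr => i _; rewrite mul1r monomial_cat /monomial !big_cons big_nil mulr1.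
apply: quadrature_exact_comb => i _; apply: (IH t) => //.
by rewrite size_cat /= -st; lia.
Qed.

Lemma sph_design_homogE :
  sph_design sigma m v <->
  half_design sigma m v /\ weighted_design sigma m (homog_poly m.-1) v.
Proof.
rewrite /sph_design /half_design deg_le_designE !homog_designE.
split => [exact_le | [exact_m exact_m1]]; last exact: quadrature_exact_deg_le.
by split => s s_eq; apply: exact_le; rewrite s_eq ?leq_pred.
Qed.

Lemma homog_design_moments k :
  weighted_design sigma m (homog_poly k) v <->
  (forall f : words k, sph_moment sigma (codom f) = wmoment m v (codom f)).
Proof.
rewrite homog_designE; split => [exact_k f | moments_eq s sk].
  by apply/quadrature_exact_monomial/exact_k; rewrite size_codom card_ord.
apply/quadrature_exact_monomial.
have /eqP sk' := sk; pose t := Tuple sk'.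
have -> : s = codom [ffun i => tnth t i].
  rewrite codomE -[LHS]/(tval t) -[in LHS](map_tnth_enum t).
  by apply: eq_map => i; rewrite ffunE.
exact: moments_eq.
Qed.

End Designs.

Section MomentBound.
Variables (R : realType) (d n m : nat).
Variables (sigma : probability (d.-tuple R) R) (v : 'I_n -> d.-tuple R).
Hypotheses (sigma_surf : normalised_surface_measure sigma)
  (v_neq0 : exists j, v j != zerov d) (m_gt0 : (0 < m)%N).
Local Notation words k := {ffun 'I_k -> 'I_d}.
Local Notation S := (\sum_(l < n) normv (v l) ^+ m)%R.

Lemma sum_moment_wmoment k :
  \sum_(f : words k) sph_moment sigma (codom f) * wmoment m v (codom f) =
  \sum_(f : words k) sph_moment sigma (codom f) ^+ 2.
Proof.
transitivity (wavg m v (fun=> \sum_(f : words k) sph_moment sigma (codom f) ^+ 2)).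
  rewrite -wavg_comb; apply: eq_wavg => x xS.
  by rewrite -(sum_monomial_moment sigma_surf k xS); apply: eq_bigr => f _; rewrite mulrC.
by rewrite /wavg -mulr_suml sum_mweight // mul1r.
Qed.

Lemma gram_design_bound k (G : R) :
  G = S ^+ 2 * \sum_(f : words k) wmoment m v (codom f) ^+ 2 ->
  (bm sigma k * (S ^+ 2)%:E <= G%:E)%E /\
  (G%:E = (bm sigma k * (S ^+ 2)%:E)%E <-> weighted_design sigma m (homog_poly k) v).
Proof.
move=> ->; have [le_sum eq_sum] := sum_sqr_pythagoras (sum_moment_wmoment k).
have S2_gt0 : 0 < S ^+ 2 by rewrite exprn_gt0 // sum_normv_gt0.
rewrite bm_moments -EFinM lee_fin mulrC ler_pM2l //; split=> //.
rewrite homog_design_moments; apply: (iff_trans _ eq_sum).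
have S2_neq0 := lt0r_neq0 S2_gt0.
by split=> [eq_S2|-> //]; apply: (mulfI S2_neq0); exact: EFin_inj.
Qed.

End MomentBound.

Theorem theorem4p7 (R : realType) (d n m : nat)
  (sigma : probability (d.-tuple R) R) (v : 'I_n -> d.-tuple R) :
  (2 <= d)%N -> (1 <= m)%N ->
  normalised_surface_measure sigma ->
  (exists j, v j != zerov d) ->
  let S := \sum_(l < n) normv (v l) ^+ m in
  let lhs := \sum_(j < n) \sum_(k < n) dotv (v j) (v k) ^+ m in
  let lhs' := \sum_(j < n) \sum_(k < n)
                normv (v j) * normv (v k) * dotv (v j) (v k) ^+ m.-1 in
  [/\ (bm sigma m * (S ^+ 2)%:E <= lhs%:E)%E,
      lhs%:E = (bm sigma m * (S ^+ 2)%:E)%E <-> half_design sigma m v,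
      (bm sigma m.-1 * (S ^+ 2)%:E <= lhs'%:E)%E &
      sph_design sigma m v <->
        (half_design sigma m v /\ lhs'%:E = (bm sigma m.-1 * (S ^+ 2)%:E)%E)].
Proof.
move=> _ m_gt0 sigma_surf v_neq0 S lhs lhs'.
have lhsE : lhs = S ^+ 2 * \sum_(f : {ffun 'I_m -> 'I_d}) wmoment m v (codom f) ^+ 2.
  rewrite -(gram_wmoment v_neq0 m_gt0 (c := fun=> 1)) => [|j]; last exact: mul1r.
  by apply: eq_bigr => j _; apply: eq_bigr => l _; rewrite !mul1r.
have lhs'E : lhs' = S ^+ 2 * \sum_(f : {ffun 'I_m.-1 -> 'I_d}) wmoment m v (codom f) ^+ 2.
  by apply: gram_wmoment => // j; rewrite -exprS prednK.
have [le_m eq_m] := gram_design_bound sigma_surf v_neq0 m_gt0 lhsE.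
have [le_m1 eq_m1] := gram_design_bound sigma_surf v_neq0 m_gt0 lhs'E.
by split=> //; rewrite sph_design_homogE eq_m1.
Qed.
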